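(* Let $F$ be a free group of finite rank $N\ge2$ with free basis $B$, $X$ its Cayley graph with respect to $B$, and $r\in\mathbb{N}$. Let $P$ be a geodesic path in $X$ from $u\in V(X)$ to $v\in V(X)$ passing through the vertices $v_0=u,v_1,\dots,v_m=v$ in this order. Let $T_i\in\mathcal{R}_r(v_i)$ for $i=0,\dots,m$. If $T_{i-1}$ and $T_i$ are connectable for every $i=1,\dots,m$, then $T_0$ and $T_m$ are connectable.
   Context: $X$ is a tree with path metric in which each edge has length one; $\partial F=\partial X$. $\mathcal{H}(\partial F)$ is the set of closed subsets of $\partial F$ with at least two points; for $S\in\mathcal{H}(\partial F)$, $CH(S)$ is the union of all geodesic lines in $X$ joining two points of $S$. $B(v,r)$ is the closed ball of radius $r$ about $v$, and $B(u,v,r)=B(u,r)\cap B(v,r)$. $\mathcal{R}_r(v)$ is the set of subgraphs $T\subset B(v,r)$ with $v\in T$ such that $T=CH(S)\cap B(v,r)$ for some $S\in\mathcal{H}(\partial F)$. For $T_1\in\mathcal{R}_r(u)$ and $T_2\in\mathcal{R}_r(v)$, $T_1$ and $T_2$ are connectable if $T_1\cap B(u,v,r)=T_2\cap B(u,v,r)$ (in particular they are always connectable when $B(u,v,r)=\emptyset$). *)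

From mathcomp Require Import all_boot all_order all_algebra.
Set Implicit Arguments. Unset Strict Implicit. Unset Printing Implicit Defensive.
Import GRing.Theory Num.Theory.

(* The free group F of rank N on the basis B = {b_0,...,b_{N-1}}:
   elements are reduced words over the letters b_i^{+1} / b_i^{-1}.
   X is the Cayley graph w.r.t. B (edges g -- g b^{+-1}); it is a tree,
   and all its subgraphs considered here (CH(S), balls, their intersections)
   are induced subgraphs, so they are represented by their vertex sets. *)

Section FreeTree.
Variable N : nat.

(* letter (i, true) = b_i, (i, false) = b_i^{-1} *)
Definition Letter := ('I_N * bool)%type.
Definition linv (a : Letter) : Letter := (a.1, ~~ a.2).

Definition reduced (s : seq Letter) : bool :=
  sorted (fun a b => b != linv a) s.

Definition Vertex := {s : seq Letter | reduced s}.

Definition adj (x y : Vertex) : Prop :=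
  exists a : Letter, val y = rcons (val x) a \/ val x = rcons (val y) a.

Definition walk (x y : Vertex) (n : nat) : Prop :=
  exists p : nat -> Vertex,
    [/\ p 0 = x, p n = y & forall i, i < n -> adj (p i) (p i.+1)].

Definition is_dist (x y : Vertex) (n : nat) : Prop :=
  walk x y n /\ forall k, walk x y k -> n <= k.

Definition ball (v : Vertex) (r : nat) (x : Vertex) : Prop :=
  exists n, n <= r /\ walk v x n.

(* boundary dF = dX: infinite reduced words *)
Definition End := {xi : nat -> Letter | forall n, xi n.+1 != linv (xi n)}.

(* closed subsets of dF (cylinder / Gromov topology) *)
Definition closed_bd (S : End -> Prop) : Prop :=
  forall xi : End,
    (forall k, exists eta : End, S eta /\ forall i, i < k -> proj1_sig eta i = proj1_sig xi i) ->
    S xi.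

Definition in_H (S : End -> Prop) : Prop :=
  closed_bd S /\ exists xi eta : End, [/\ S xi, S eta & xi <> eta].

Definition conv_to (g : nat -> Vertex) (xi : End) : Prop :=
  forall k, exists n0, forall n, n0 <= n ->
    take k (val (g n)) = mkseq (proj1_sig xi) k.

Definition geod_line (g : int -> Vertex) : Prop :=
  forall i j : int, is_dist (g i) (g j) `|i - j|%N.

Definition line_joins (g : int -> Vertex) (eta xi : End) : Prop :=
  [/\ geod_line g, conv_to (fun n => g (Posz n)) xi
    & conv_to (fun n => g (- Posz n)%R) eta].

Definition CH (S : End -> Prop) (x : Vertex) : Prop :=
  exists (xi eta : End) (g : int -> Vertex),
    [/\ S xi, S eta, line_joins g eta xi & exists i, g i = x].

Definition in_R (r : nat) (v : Vertex) (T : Vertex -> Prop) : Prop :=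
  [/\ forall x, T x -> ball v r x, T v &
      exists S, in_H S /\ forall x, T x <-> (CH S x /\ ball v r x)].

Definition connectable (r : nat) (u : Vertex) (T1 : Vertex -> Prop)
    (v : Vertex) (T2 : Vertex -> Prop) : Prop :=
  forall x, (T1 x /\ (ball u r x /\ ball v r x)) <->
            (T2 x /\ (ball u r x /\ ball v r x)).

Definition geodesic_path (vs : nat -> Vertex) (m : nat) : Prop :=
  (forall i, i < m -> adj (vs i) (vs i.+1)) /\ is_dist (vs 0) (vs m) m.

End FreeTree.

From mathcomp Require Import all_boot all_order all_algebra.
From mathcomp Require Import zify.

Set Implicit Arguments.
Unset Strict Implicit.
Unset Printing Implicit Defensive.

(* In the Cayley tree of F the distance between reduced words s and t is
   |s| + |t| - 2 |lcp(s, t)|.  Along an edge this distance to a fixed x changes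
   by exactly one, and a vertex v has at most one neighbour closer to x.  On a
   geodesic path, whose consecutive vertices never backtrack, the distance
   j |-> d(x, v_j) therefore has no local maximum, so it is bounded by its
   values at the endpoints, and B(v_0, r) /\ B(v_m, r) lies in every B(v_j, r).
   Connectability of T_0 and T_m at x in that intersection then follows by
   chaining the connectability of the consecutive T_j at x. *)

Section LongestCommonPrefix.
Variable T : eqType.
Implicit Types (s t : seq T) (a : T).

Fixpoint lcp s t : nat :=
  match s, t with
  | x :: s', y :: t' => if x == y then (lcp s' t').+1 else 0
  | _, _ => 0
  end.

Lemma lcp_leql s t : lcp s t <= size s.
Proof. by elim: s t => [|x s IH] [|y t] //=; case: eqP => // _; exact: IH. Qed.

Lemma lcp_leqr s t : lcp s t <= size t.
Proof. by elim: s t => [|x s IH] [|y t] //=; case: eqP => // _; exact: IH. Qed.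

Lemma eq_lcp_sizer s t : (lcp s t == size t) = prefix t s.
Proof.
elim: t s => [|y t IH] [|x s] //=.
by case: (x =P y) => [<-|/eqP ne] /=;
  rewrite ?eqxx ?eqSS ?IH // [y == x]eq_sym (negPf ne).
Qed.

Lemma lcp_rcons s t a :
  lcp s (rcons t a) = if prefix (rcons t a) s then (size t).+1 else lcp s t.
Proof.
elim: t s => [|y t IH] [|x s] //=.
  by rewrite prefix0s [a == x]eq_sym; case: (x == a); case: s.
by rewrite IH [y == x]eq_sym; case: (x == y); case: prefix.
Qed.

Definition word_dist s t := size s + size t - 2 * lcp s t.

Lemma word_dist_id s : word_dist s s = 0.
Proof.
have /eqP lcp_s : lcp s s == size s by rewrite eq_lcp_sizer prefix_refl.
by rewrite /word_dist lcp_s; lia.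
Qed.

Lemma word_dist_eq0 s t : word_dist s t = 0 -> t = s.
Proof.
rewrite /word_dist => dist0.
have := lcp_leql s t; have := lcp_leqr s t => le_t le_s.
have /eqP : lcp s t = size t by lia.
rewrite eq_lcp_sizer prefixE => /eqP <-.
have -> : size t = size s by lia.
by rewrite take_size.
Qed.

Lemma word_dist_rcons_prefix s t a :
  prefix (rcons t a) s -> word_dist s t = (word_dist s (rcons t a)).+1.
Proof.
move=> pre; have /size_prefix := pre; rewrite size_rcons => lt_ts.
have /eqP lcp_t : lcp s t == size t.
  by rewrite eq_lcp_sizer (prefix_trans (prefix_rcons t a)).
by rewrite /word_dist lcp_rcons pre lcp_t size_rcons; lia.
Qed.

Lemma word_dist_rcons_nprefix s t a :
  ~~ prefix (rcons t a) s -> word_dist s (rcons t a) = (word_dist s t).+1.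
Proof.
move=> /negPf npre; have := lcp_leql s t; have := lcp_leqr s t.
by rewrite /word_dist lcp_rcons npre size_rcons; lia.
Qed.

Lemma word_dist_rcons s t a : word_dist s t = (word_dist s (rcons t a)).+1 \/
  word_dist s (rcons t a) = (word_dist s t).+1.
Proof.
have [pre|npre] := boolP (prefix (rcons t a) s).
  by left; apply: word_dist_rcons_prefix.
by right; apply: word_dist_rcons_nprefix.
Qed.

End LongestCommonPrefix.

Section CayleyTree.
Variable N : nat.
Implicit Types x v w : Vertex N.

Definition vdist x v := word_dist (val x) (val v).

Lemma adj_sym v w : adj v w -> adj w v.
Proof. by case=> a [e|e]; exists a; [right|left]. Qed.

Lemma vdist_id x : vdist x x = 0.
Proof. exact: word_dist_id. Qed.

Lemma vdist_eq0 x v : vdist x v = 0 -> v = x.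
Proof. by move/word_dist_eq0/val_inj. Qed.

Lemma vdist_adj x v w :
  adj v w -> vdist x w = (vdist x v).+1 \/ vdist x v = (vdist x w).+1.
Proof.
rewrite /vdist => -[a [->|->]];
  [have := word_dist_rcons (val x) (val v) a | have := word_dist_rcons (val x) (val w) a];
  tauto.
Qed.

Lemma adj_closer x v w : adj v w -> vdist x w < vdist x v ->
  if prefix (val v) (val x)
  then prefix (val w) (val x) /\ size (val w) = (size (val v)).+1
  else exists a, val v = rcons (val w) a.
Proof.
rewrite /vdist => -[a [->|->]].
- have [pre|npre] := boolP (prefix (rcons (val v) a) (val x)).
    by rewrite (prefix_trans (prefix_rcons _ a) pre) size_rcons.
  by rewrite word_dist_rcons_nprefix // ltnNge leqnSn.
- have [pre|_] := boolP (prefix (rcons (val w) a) (val x)).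
    by rewrite (word_dist_rcons_prefix pre) ltnNge leqnSn.
  by exists a.
Qed.

Lemma closer_neighbour_unique x v w1 w2 : adj v w1 -> adj v w2 ->
  vdist x w1 < vdist x v -> vdist x w2 < vdist x v -> w1 = w2.
Proof.
move=> /adj_closer c1 /adj_closer c2 /c1 {}c1 /c2 {}c2; apply: val_inj.
case: (prefix _ _) c1 c2 => [[pre1 size1] [pre2 size2]|[a1 e1] [a2 e2]].
- by move: pre1 pre2; rewrite !prefixE size1 -size2 => /eqP -> /eqP.
- by move: e2; rewrite e1 => /rcons_inj [].
Qed.

Lemma exists_closer_neighbour x v :
  0 < vdist x v -> exists2 w, adj v w & vdist x v = (vdist x w).+1.
Proof.
have [/prefixP [[|a s] ex]|npre] := boolP (prefix (val v) (val x)).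
- by rewrite (_ : v = x) ?vdist_id //; apply: val_inj; rewrite ex cats0.
- have pre : prefix (rcons (val v) a) (val x).
    by rewrite ex -cat1s catA cats1 prefix_prefix.
  move=> _; exists (exist (@reduced N) _ (prefix_sorted pre (valP x))).
    by exists a; left.
  exact: word_dist_rcons_prefix.
- case/lastP E: (val v) npre => [|w a]; first by rewrite prefix0s.
  move=> npre _; have pre : prefix w (val v) by rewrite E prefix_rcons.
  exists (exist (@reduced N) _ (prefix_sorted pre (valP v))).
    by exists a; right.
  by rewrite /vdist /= E word_dist_rcons_nprefix.
Qed.

Lemma walk_vdist_leq x v n : walk v x n -> vdist x v <= n.
Proof.
case=> p [p0 pn step]; suff dist_p k : k <= n -> vdist x v <= k + vdist x (p k).
  by have := dist_p n (leqnn n); rewrite pn vdist_id addn0.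
elim: k => [|k IH] lt_kn; first by rewrite p0.
have := vdist_adj x (step k lt_kn); have := IH (ltnW lt_kn); lia.
Qed.

Lemma walk_vdist x v : walk v x (vdist x v).
Proof.
move Ed: (vdist x v) => n; elim: n v Ed => [|n IH] v Ed.
  by rewrite (vdist_eq0 Ed); exists (fun=> x).
have [w vw Ew] : exists2 w, adj v w & vdist x v = (vdist x w).+1.
  by apply: exists_closer_neighbour; rewrite Ed.
have [p [p0 pn step]] : walk w x n by apply: IH; lia.
exists (fun k => if k is k'.+1 then p k' else v); split => // -[_|k lt_kn] /=.
  by rewrite p0.
exact: step.
Qed.

Lemma ball_vdist v r x : ball v r x <-> vdist x v <= r.
Proof.
split => [[n [le_nr /walk_vdist_leq]]|le_dr]; first by lia.
by exists (vdist x v); split => //; apply: walk_vdist.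
Qed.

End CayleyTree.

Section NoLocalMax.
Variables (g : nat -> nat) (m : nat).
Hypothesis step_neq : forall i, i < m -> g i != g i.+1.
Hypothesis no_local_max : forall i, i.+2 <= m -> g i < g i.+1 -> g i.+1 <= g i.+2.

Lemma ascent_persists j k : j <= k < m -> g j < g j.+1 -> g k < g k.+1.
Proof.
elim: k => [|k IH] /andP[le_jk lt_km] up_j.
  by have <- : j = 0 by lia.
have [<-|ne_jk] := eqVneq j k.+1; first exact: up_j.
have up_k : g k < g k.+1 by apply: IH => //; lia.
by have := no_local_max lt_km up_k; have := step_neq lt_km; lia.
Qed.

Lemma ascent_monotone j k : j < k <= m -> g j < g j.+1 -> g j.+1 <= g k.
Proof.
elim: k => [|k IH] /andP[lt_jk le_km] up_j; first by [].
have [<-|ne_jk] := eqVneq j k; first by [].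
have le_k : g j.+1 <= g k by apply: IH; lia.
have up_k : g k < g k.+1 by apply: ascent_persists up_j; lia.
lia.
Qed.

Lemma le_maxn_ends i : i <= m -> g i <= maxn (g 0) (g m).
Proof.
suff ends k : k <= m -> g k <= g 0 \/ forall l, k <= l <= m -> g k <= g l.
  by move=> le_im; case: (ends i le_im) => [|/(_ m)]; lia.
elim: k => [|k IH] lt_km; first by left.
have [up_k|down_k] := ltnP (g k) (g k.+1).
  by right=> l /andP[lt_kl le_lm]; apply: ascent_monotone => //; lia.
have lt_k : g k.+1 < g k by have := step_neq lt_km; lia.
case: (IH (ltnW lt_km)) => [le_0|le_l]; first by left; lia.
by have := le_l k.+1; lia.
Qed.

End NoLocalMax.

Section GeodesicPaths.
Variables (N : nat) (vs : nat -> Vertex N) (m : nat).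
Hypothesis geo : geodesic_path vs m.

Lemma geodesic_path_no_backtrack i : i.+2 <= m -> vs i <> vs i.+2.
Proof.
case: geo => step [_ minimal] lt_im back.
suff /minimal : walk (vs 0) (vs m) (m - 2) by lia.
exists (fun j => if j <= i then vs j else vs j.+2); split.
- by [].
- case: ifP => [le_mi|_]; last by congr vs; lia.
  have -> : m - 2 = i by lia.
  by rewrite back; congr vs; lia.
- by move=> j; case: (ltngtP j i) => [_|_|->] lt_jm; rewrite ?back; apply: step; lia.
Qed.

Lemma ball_geodesic_path r x i :
  ball (vs 0) r x -> ball (vs m) r x -> i <= m -> ball (vs i) r x.
Proof.
rewrite !ball_vdist => b0 bm le_im.
have step := geo.1.
apply: leq_trans (_ : _ <= maxn (vdist x (vs 0)) (vdist x (vs m))) _;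
  last by rewrite geq_max b0 bm.
apply: (le_maxn_ends (g := fun j => vdist x (vs j))) le_im.
- by move=> j /step /(vdist_adj x); lia.
- move=> j lt_jm closer_j; rewrite leqNgt; apply/negP => closer_j2.
  apply: (geodesic_path_no_backtrack lt_jm).
  apply: (closer_neighbour_unique (x := x) (v := vs j.+1)) => //.
    by apply/adj_sym/step; lia.
  by apply: step.
Qed.

End GeodesicPaths.

Lemma connectable_chain N r m (vs : nat -> Vertex N) (T : nat -> Vertex N -> Prop) :
  (forall x, ball (vs 0) r x -> ball (vs m) r x -> forall i, i <= m -> ball (vs i) r x) ->
  (forall i, i < m -> connectable r (vs i) (T i) (vs i.+1) (T i.+1)) ->
  connectable r (vs 0) (T 0) (vs m) (T m).
Proof.
move=> balls conn x.
suff chain : ball (vs 0) r x -> ball (vs m) r x -> forall k, k <= m -> T 0 x <-> T k x.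
  by split=> -[Tx [b0 bm]]; have := chain b0 bm m (leqnn m); tauto.
move=> b0 bm; elim=> [|k IH] lt_km //.
have := conn k lt_km x; have := balls x b0 bm k (ltnW lt_km).
have := balls x b0 bm k.+1 lt_km; have := IH (ltnW lt_km); tauto.
Qed.

Theorem mainTheorem5 (N : nat) (hN : 2 <= N) (r m : nat)
    (vs : nat -> Vertex N) (T : nat -> Vertex N -> Prop) :
  geodesic_path vs m ->
  (forall i, i <= m -> in_R r (vs i) (T i)) ->
  (forall i, 1 <= i <= m -> connectable r (vs i.-1) (T i.-1) (vs i) (T i)) ->
  connectable r (vs 0) (T 0) (vs m) (T m).
Proof.
move=> geo _ conn; apply: connectable_chain => [x b0 bm i|i lt_im].
  exact: ball_geodesic_path.
exact: (conn i.+1).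
Qed.
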